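(* Every oriented flat twisted link can be represented by a flat twisted braid whose closure is equivalent (isotopic) to the original link. That is, for every oriented flat twisted link diagram $D$ there exist $n\ge1$ and a flat twisted braid $\beta$ on $n$ strands whose closure is equivalent to $D$ under planar isotopy and extended flat twisted Reidemeister moves.
   Context: A flat twisted link diagram is a generic immersion of finitely many (oriented) circles in the plane whose double points are either flat crossings (ordinary crossings with no over/under information) or virtual crossings (drawn encircled), and which may in addition carry finitely many bars, i.e. short segments drawn transversally across the curve at points that are not crossings. Two flat twisted link diagrams are equivalent (isotopic), i.e. represent the same flat twisted link, if related by planar isotopy and a finite sequence of extended flat twisted Reidemeister moves: the moves R1, R2, R3 with flat crossings in place of classical crossings; the virtual moves V1, V2, V3 (analogues of R1–R3 with only virtual crossings) and V4 (an arc containing only virtual crossings passes across a flat crossing); and the twisted moves T1 (a bar slides along an arc through a virtual crossing), T2 (two adjacent bars on the same arc cancel) and T3 with a flat crossing (a flat crossing with one bar on each of its four incident arcs near the crossing is replaced by the configuration in which the two strands cross virtually, then at a flat crossing, then virtually again; in braid notation $b_ib_{i+1}c_ib_{i+1}b_i$ is replaced by $v_ic_iv_i$). A flat twisted braid on $n$ strands is a braid diagram on $n$ monotone strands whose crossings are flat or virtual and whose strands may carry bars; its closure is obtained by joining each top endpoint to the corresponding bottom endpoint by simple arcs in the plane, without new crossings or bars. *)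

(* Combinatorial (Gauss-code) model of flat twisted link diagrams modulo
   planar isotopy, the virtual moves V1-V4 and the twisted move T1; the
   remaining moves R1, R2, R3, T2, T3 are encoded as local tangle
   replacements. *)
From mathcomp Require Import all_boot.
From Stdlib Require Import Relations.

Set Implicit Arguments.
Unset Strict Implicit.
Unset Printing Implicit Defensive.

(* An event met while travelling along an oriented component:
   [Some (c, r)] : passage through the flat crossing labelled [c];
     [r = true] iff the tangent of this passage is the FIRST vector of the
     positively oriented (counterclockwise) basis formed by the two tangents
     at [c];
   [None] : a bar. *)
Definition event := option (nat * bool).
Definition Cr (c : nat) (r : bool) : event := Some (c, r).
Definition Bar : event := None.

(* A diagram: list of oriented components, each a cyclic word of events. *)
Definition diagram := seq (seq event).

Definition wf (D : diagram) : Prop :=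
  forall c : nat,
    count_mem (Cr c true) (flatten D) = count_mem (Cr c false) (flatten D)
    /\ count_mem (Cr c true) (flatten D) <= 1.

(* A tangle: list of oriented strands (words); strand j of the left-hand
   side of a move has the same endpoints as strand j of the right-hand side. *)
Definition tangle := seq (seq event).

(* Basic moves, in one orientation each. *)
Inductive basic_move : tangle -> tangle -> Prop :=
| MR1 c x : basic_move [:: [:: Cr c x; Cr c (~~ x)]] [:: [::]]
| MR2 a b x : a != b ->
    basic_move [:: [:: Cr a x; Cr b (~~ x)]; [:: Cr a (~~ x); Cr b x]]
               [:: [::]; [::]]
| MR3 p q r : uniq [:: p; q; r] ->
    (* flat braid relation c1 c2 c1 = c2 c1 c2 ; p = AB, q = AC, r = BC *)
    basic_move [:: [:: Cr p true; Cr q true];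
                   [:: Cr p false; Cr r true];
                   [:: Cr q false; Cr r false]]
               [:: [:: Cr q true; Cr p true];
                   [:: Cr r true; Cr p false];
                   [:: Cr r false; Cr q false]]
| MT2 : basic_move [:: [:: Bar; Bar]] [:: [::]]
| MT3 c x :
    (* b_i b_{i+1} c_i b_{i+1} b_i  <->  v_i c_i v_i *)
    basic_move [:: [:: Bar; Cr c x; Bar]; [:: Bar; Cr c (~~ x); Bar]]
               [:: [:: Cr c (~~ x)]; [:: Cr c x]].

(* Re-orienting a tangle: strands j with [nth false s j] are reversed, and
   [m] says whether the whole picture is reflected.  Reversing one of the two
   strands through a crossing swaps the roles at that crossing; a reflection
   swaps all roles. *)
Definition is_label (c : nat) (e : event) : bool :=
  if e is Some (c', _) then c' == c else false.

Definition rev_count (T : tangle) (s : seq bool) (c : nat) : nat :=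
  count (is_label c)
    (flatten [seq nth [::] T j | j <- iota 0 (size T) & nth false s j]).

Definition reorient_ev (T : tangle) (m : bool) (s : seq bool) (e : event)
  : event :=
  if e is Some (c, r) then Some (c, r (+) m (+) odd (rev_count T s c))
  else None.

Definition reorient (m : bool) (s : seq bool) (T : tangle) : tangle :=
  [seq (let w := map (reorient_ev T m s) (nth [::] T j) in
        if nth false s j then rev w else w) | j <- iota 0 (size T)].

(* Templates: a diagram with holes; hole j is where strand j of the tangle
   is inserted. *)
Inductive piece := PEv of event | PHole of nat.

Definition fill (T : tangle) (tpl : seq (seq piece)) : diagram :=
  [seq flatten [seq (match p with PEv e => [:: e] | PHole j => nth [::] T j end)
               | p <- comp] | comp <- tpl].

Definition is_hole (j : nat) (p : piece) : bool :=
  if p is PHole j' then j' == j else false.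

Definition holes_ok (k : nat) (tpl : seq (seq piece)) : Prop :=
  (forall j, j < k -> count (is_hole j) (flatten tpl) = 1) /\
  (forall j, k <= j -> count (is_hole j) (flatten tpl) = 0).

Definition relabel (f : nat -> nat) (D : diagram) : diagram :=
  [seq [seq (if e is Some (c, r) then Some (f c, r) else None) | e <- w]
  | w <- D].

Inductive ft_step : diagram -> diagram -> Prop :=
| St_rot A w B k : ft_step (A ++ w :: B) (A ++ rot k w :: B)
| St_perm D1 D2 : perm_eq D1 D2 -> ft_step D1 D2
| St_relabel f D : injective f -> ft_step D (relabel f D)
| St_move T T' m s tpl :
    basic_move T T' -> holes_ok (size T) tpl ->
    wf (fill (reorient m s T) tpl) -> wf (fill (reorient m s T') tpl) ->
    ft_step (fill (reorient m s T) tpl) (fill (reorient m s T') tpl).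

Definition ft_equiv : diagram -> diagram -> Prop := clos_refl_sym_trans _ ft_step.

(* Braid generators, read bottom to top, strands oriented upward, positions
   0..n-1 numbered from left to right.
   BC i : flat crossing c_i of positions i, i+1 (the strand coming from
          position i goes to position i+1, i.e. passes from lower-left to
          upper-right);
   BV i : virtual crossing v_i;  BB i : bar b_i on the strand at position i. *)
Inductive bgen := BC of nat | BV of nat | BB of nat.

Definition braid := seq bgen.

Definition gen_valid (n : nat) (g : bgen) : bool :=
  match g with BC i | BV i => i.+1 < n | BB i => i < n end.

Definition braid_valid (n : nat) (b : braid) : bool := all (gen_valid n) b.

Definition add_ev (W : seq (seq event)) (s : nat) (e : event) :=
  set_nth [::] W s (rcons (nth [::] W s) e).

Definition swap_pos (pos : seq nat) (i : nat) :=
  set_nth 0 (set_nth 0 pos i (nth 0 pos i.+1)) i.+1 (nth 0 pos i).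

(* [pos]: strand (named by its bottom position) currently at each position;
   [W]: word of each strand so far; [k]: label of the current generator. *)
Fixpoint braid_run (k : nat) (b : braid) (pos : seq nat) (W : seq (seq event))
  : seq nat * seq (seq event) :=
  match b with
  | [::] => (pos, W)
  | g :: b' =>
    match g with
    | BC i => braid_run k.+1 b' (swap_pos pos i)
               (add_ev (add_ev W (nth 0 pos i) (Cr k true))
                       (nth 0 pos i.+1) (Cr k false))
    | BV i => braid_run k.+1 b' (swap_pos pos i) W
    | BB i => braid_run k.+1 b' pos (add_ev W (nth 0 pos i) Bar)
    end
  end.

(* Closure: top position p is joined to bottom position p. *)
Definition braid_closure (n : nat) (b : braid) : diagram :=
  let: (pos, W) := braid_run 0 b (iota 0 n) (nseq n [::]) in
  let next (s : nat) := index s pos in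
  let orbit (s : nat) :=
    let t := traject next s n.+1 in take (index s (behead t)).+1 t in
  [seq flatten [seq nth [::] W j | j <- orbit s]
  | s <- iota 0 n & all (leq s) (orbit s)].

From mathcomp Require Import all_boot zify.
From Stdlib Require Import Relations.

(* In this model a diagram is its Gauss code up to relabelling of the
   crossings: virtual crossings leave no trace.  Cut each component into one
   arc per event (flat passage or bar) followed by an empty closing arc, and
   give every arc its own braid strand.  Bars are put on their strands
   directly; each flat crossing is produced by bringing its two strands next
   to each other with virtual crossings and crossing them flatly; a final
   virtual permutation sends the top of every arc to the bottom of the next
   arc of its component.  The closure is then the diagram itself, each
   crossing being renamed after the braid generator that produces it. *)

Set Implicit Arguments.
Unset Strict Implicit.
Unset Printing Implicit Defensive.

Lemma braid_run_cat k b1 b2 pos W :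
  braid_run k (b1 ++ b2) pos W =
  braid_run (k + size b1) b2 (braid_run k b1 pos W).1 (braid_run k b1 pos W).2.
Proof.
elim: b1 k pos W => [|g b1 IH] k pos W /=; first by rewrite addn0.
by case: g => i; rewrite IH addSnnS.
Qed.

Lemma braid_valid_cat n b1 b2 :
  braid_valid n (b1 ++ b2) = braid_valid n b1 && braid_valid n b2.
Proof. exact: all_cat. Qed.

Lemma braid_run_virtual k ix pos W :
  braid_run k (map BV ix) pos W = (foldl swap_pos pos ix, W).
Proof. by elim: ix k pos => [|i ix IH] k pos //=. Qed.

Lemma braid_run_bars n k js W : all (gtn n) js ->
  braid_run k (map BB js) (iota 0 n) W =
  (iota 0 n, foldl (fun W j => add_ev W j Bar) W js).
Proof.
elim: js k W => [|j js IH] k W //= /andP[lt_jn all_js].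
by rewrite nth_iota // IH.
Qed.

Lemma nth_add_ev W s e j :
  nth [::] (add_ev W s e) j =
  if j == s then rcons (nth [::] W s) e else nth [::] W j.
Proof. by rewrite nth_set_nth /=; case: eqP => // ->. Qed.

Lemma nth_add_bars W js j :
  nth [::] (foldl (fun W j => add_ev W j Bar) W js) j =
  nth [::] W j ++ nseq (count_mem j js) Bar.
Proof.
elim: js W => [|i js IH] W /=; first by rewrite cats0.
rewrite IH nth_add_ev eq_sym; case: eqP => [->|_] /=; last by rewrite add0n.
by rewrite -cats1 -catA.
Qed.

Lemma swap_pos_cat p1 y x p2 :
  swap_pos (p1 ++ y :: x :: p2) (size p1) = p1 ++ x :: y :: p2.
Proof. by elim: p1 => //= z p1 IH; apply: (congr1 (cons z) IH). Qed.

Lemma foldl_swap_pos_cons x pos ix :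
  foldl swap_pos (x :: pos) (map S ix) = x :: foldl swap_pos pos ix.
Proof. by elim: ix pos => [|i ix IH] pos //=; rewrite IH. Qed.

Lemma swaps_to_front x p1 p2 :
  exists2 ix, braid_valid (size (p1 ++ x :: p2)) (map BV ix)
            & foldl swap_pos (p1 ++ x :: p2) ix = x :: p1 ++ p2.
Proof.
elim/last_ind: p1 p2 => [|p1 y IH] p2; first by exists [::].
have [ix valid_ix swap_ix] := IH (y :: p2).
exists (size p1 :: ix); last by rewrite /= -cats1 -catA swap_pos_cat swap_ix -catA.
rewrite -cats1 -catA /= andbC; move: valid_ix; rewrite !size_cat /= => -> /=.
lia.
Qed.

Lemma swaps_perm pos q : perm_eq pos q ->
  exists2 ix, braid_valid (size pos) (map BV ix) & foldl swap_pos pos ix = q.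
Proof.
elim: q pos => [|x q IH] pos pos_q.
  by exists [::]; rewrite // (perm_small_eq _ pos_q).
have x_pos : x \in pos by rewrite (perm_mem pos_q) mem_head.
case/splitPr: x_pos pos_q => p1 p2 pos_q.
have [ix1 valid1 swap1] := swaps_to_front x p1 p2.
have /IH[ix2 valid2 swap2] : perm_eq (p1 ++ p2) q.
  by rewrite -(perm_cons x); apply: perm_trans pos_q; rewrite -cat1s perm_catCA.
exists (ix1 ++ map S ix2); last by rewrite foldl_cat swap1 foldl_swap_pos_cons swap2.
rewrite map_cat braid_valid_cat valid1 /braid_valid !all_map.
by move: valid2; rewrite /braid_valid all_map !size_cat /= addnS.
Qed.

Lemma nth_add_crossing W a b e1 e2 j : a != b ->
  nth [::] (add_ev (add_ev W a e1) b e2) j =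
  nth [::] W j ++ (if j == a then [:: e1] else [::]) ++
                  (if j == b then [:: e2] else [::]).
Proof.
move=> neq_ab; rewrite !nth_add_ev.
case: (eqVneq j b) => [->|_]; last by case: eqP => [->|_] /=; rewrite ?cats0 ?cats1.
by rewrite [b == a]eq_sym (negbTE neq_ab) /= cats1.
Qed.

Lemma braid_run_permute n k pos q W :
  perm_eq pos (iota 0 n) -> perm_eq q (iota 0 n) ->
  exists2 ix, braid_valid n (map BV ix) & braid_run k (map BV ix) pos W = (q, W).
Proof.
move=> pos_n q_n; have /swaps_perm[ix valid_ix swap_ix] : perm_eq pos q.
  by rewrite (perm_trans pos_n) // perm_sym.
exists ix; last by rewrite braid_run_virtual swap_ix.
by rewrite -(size_iota 0 n) -(perm_size pos_n).
Qed.

Lemma braid_run_flat_crossing n k pos W a b :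
  perm_eq pos (iota 0 n) -> a < n -> b < n -> a != b ->
  exists ix pos',
    [/\ braid_valid n (map BV ix ++ [:: BC 0]), perm_eq pos' (iota 0 n) &
        braid_run k (map BV ix ++ [:: BC 0]) pos W =
        (pos', add_ev (add_ev W a (Cr (k + size ix) true))
                      b (Cr (k + size ix) false))].
Proof.
move=> pos_n lt_an lt_bn neq_ab.
set rest := rem b (rem a (iota 0 n)).
have ab_n : perm_eq (a :: b :: rest) (iota 0 n).
  have a_n : a \in iota 0 n by rewrite mem_iota.
  have b_n : b \in rem a (iota 0 n).
    by rewrite (mem_rem_uniq _ (iota_uniq 0 n)) inE eq_sym neq_ab mem_iota.
  by rewrite perm_sym (perm_trans (perm_to_rem a_n)) // perm_cons perm_to_rem.
have [ix valid_ix run_ix] := braid_run_permute k W pos_n ab_n.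
exists ix, (b :: a :: rest); split.
- by rewrite braid_valid_cat valid_ix /= andbT; clear -lt_an lt_bn neq_ab; lia.
- by apply: perm_trans ab_n; rewrite -(cat1s a) -(cat1s b) perm_catCA.
- by rewrite braid_run_cat run_ix size_map.
Qed.

Definition passages (cs : seq nat) : seq (nat * bool) :=
  [seq (c, r) | c <- cs, r <- [:: true; false]].

Lemma passages_cons c cs :
  passages (c :: cs) = [:: (c, true); (c, false)] ++ passages cs.
Proof. by []. Qed.

Lemma injective_in_cons (cs : seq nat) (lab : nat -> nat) c k :
  c \notin cs -> {in cs &, injective lab} -> {in cs, forall x, k < lab x} ->
  {in c :: cs &, injective (fun x => if x \in cs then lab x else k)}.
Proof.
move=> c_notin lab_inj lab_gt.
have lab_c : (if c \in cs then lab c else k) = k by rewrite (negbTE c_notin).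
have lab_cs x : x \in cs -> (if x \in cs then lab x else k) = lab x by move->.
move=> x y /predU1P[-> | x_cs] /predU1P[-> | y_cs] //=;
  rewrite ?lab_c ?lab_cs // => E.
- by have := lab_gt y y_cs; rewrite -E ltnn.
- by have := lab_gt x x_cs; rewrite E ltnn.
- exact: lab_inj.
Qed.

(* Crossing [c] is realised by the generator of index [lab c]; the lower bound
   on the labels is what keeps them distinct along the induction. *)
Lemma braid_run_crossings n (strand : nat -> bool -> nat) cs :
  uniq cs ->
  (forall c, c \in cs ->
     [/\ strand c true < n, strand c false < n & strand c true != strand c false]) ->
  forall k pos W q, perm_eq pos (iota 0 n) -> perm_eq q (iota 0 n) ->
  exists b (lab : nat -> nat),
    [/\ braid_valid n b, {in cs &, injective lab}, {in cs, forall c, k <= lab c},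
        (braid_run k b pos W).1 = q &
        forall j, nth [::] (braid_run k b pos W).2 j =
          nth [::] W j ++
          [seq Cr (lab p.1) p.2 | p <- passages cs & j == strand p.1 p.2]].
Proof.
elim: cs => [|c cs IH].
  move=> _ _ k pos W q pos_n q_n.
  have [ix valid_ix run_ix] := braid_run_permute k W pos_n q_n.
  by exists (map BV ix), id; rewrite run_ix; split=> // j; rewrite cats0.
case/andP=> c_notin uniq_cs strand_cs k pos W q pos_n q_n.
have [lt_true lt_false neq_strands] := strand_cs c (mem_head c cs).
have [ix [pos' [valid_c pos'_n run_c]]] :=
  braid_run_flat_crossing k W pos_n lt_true lt_false neq_strands.
set k1 := k + size ix in run_c.
set W1 := add_ev (add_ev W _ _) _ _ in run_c.
have [b [lab [valid_b lab_inj lab_ge run_top run_words]]] :=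
  IH uniq_cs (fun x x_cs => strand_cs x (mem_behead (s := c :: cs) x_cs))
     k1.+1 pos' W1 q pos'_n q_n.
pose lab' x := if x \in cs then lab x else k1.
have lab'_c : lab' c = k1 by rewrite /lab' (negbTE c_notin).
have lab'_cs : {in cs, lab' =1 lab} by move=> x x_cs; rewrite /lab' x_cs.
have run_cb : braid_run k ((map BV ix ++ [:: BC 0]) ++ b) pos W =
              braid_run k1.+1 b pos' W1.
  by rewrite braid_run_cat run_c size_cat size_map addn1 addnS.
exists ((map BV ix ++ [:: BC 0]) ++ b), lab'; split.
- by rewrite braid_valid_cat valid_c valid_b.
- exact: injective_in_cons.
- move=> x; rewrite inE => /predU1P[-> | x_cs]; first by rewrite lab'_c leq_addr.
  by rewrite lab'_cs //; apply: leq_trans (ltnW (lab_ge x x_cs)); apply: leq_addr.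
- by rewrite run_cb.
move=> j; rewrite run_cb run_words nth_add_crossing // passages_cons filter_cat map_cat.
rewrite -!catA; congr (_ ++ _); rewrite catA; congr (_ ++ _).
  by rewrite /=; do 2!case: (j == _); rewrite /= ?lab'_c.
apply/eq_in_map => -[x r]; rewrite mem_filter.
by case/andP=> _ /allpairsP[[y r'] [y_cs _ [-> _]]]; rewrite /= lab'_cs.
Qed.

Fixpoint spread (D : diagram) : seq (seq event) :=
  if D is w :: D' then [seq [:: e] | e <- w] ++ [::] :: spread D' else [::].

(* [reconnect o D] lists the strand ending at each top position: within a
   component whose strands are [o, ..., o + size w], strand [o + t] ends at
   position [o + t + 1] and the closing strand at position [o], so the closure
   runs through them in order. *)
Fixpoint reconnect (o : nat) (D : diagram) : seq nat :=
  if D is w :: D' then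
    (o + size w) :: iota o (size w) ++ reconnect (o + (size w).+1) D'
  else [::].

Lemma spread_cat D1 D2 : spread (D1 ++ D2) = spread D1 ++ spread D2.
Proof. by elim: D1 => //= w D1 ->; rewrite -catA. Qed.

Lemma size_spread_cons w D : size (spread (w :: D)) = (size w).+1 + size (spread D).
Proof. by rewrite /= size_cat size_map addnS. Qed.

Lemma size_spread_gt0 D : D != [::] -> 0 < size (spread D).
Proof. by case: D => // w D _; rewrite size_spread_cons. Qed.

Lemma reconnect_cat o D1 D2 :
  reconnect o (D1 ++ D2) = reconnect o D1 ++ reconnect (o + size (spread D1)) D2.
Proof.
elim: D1 o => [|w D1 IH] o /=; first by rewrite addn0.
rewrite IH -catA size_cat size_map; congr (_ :: _ ++ _ ++ reconnect _ _) => /=; lia.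
Qed.

Lemma perm_reconnect o D : perm_eq (reconnect o D) (iota o (size (spread D))).
Proof.
elim: D o => [|w D IH] o //.
rewrite size_spread_cons iotaD [reconnect o _]/= -cat_cons; apply: perm_cat (IH _).
by rewrite -addn1 iotaD cats1 perm_sym perm_rcons.
Qed.

Definition closure_orbit (pos : seq nat) (n s : nat) : seq nat :=
  let t := traject (fun s => index s pos) s n.+1 in take (index s (behead t)).+1 t.

Lemma take_traject_cycle (T : eqType) (f : T -> T) x m n :
  m <= n -> iter m.+1 f x = x -> x \notin traject f (f x) m ->
  take (index x (behead (traject f x n.+1))).+1 (traject f x n.+1) =
  traject f x m.+1.
Proof.
move=> le_mn cycle_x first_return /=.
rewrite -(subnKC le_mn) trajectD index_cat (negbTE first_return) size_traject.
rewrite -iterSr cycle_x.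
have -> : index x (traject f x (n - m)) = 0 by case: (n - m) => [|k] //=; rewrite eqxx.
by rewrite addn0 /= take_size_cat ?size_traject.
Qed.

Section ComponentCycle.
Variables (D1 : diagram) (w : seq event) (D2 : diagram).
Let o := size (spread D1).
Let m := size w.
Let q := reconnect 0 (D1 ++ w :: D2).
Let next s := index s q.

Lemma next_component t : t <= m -> next (o + t) = o + t.+1 %% m.+1.
Proof.
move=> le_tm; rewrite /next /q reconnect_cat index_cat.
rewrite (perm_mem (perm_reconnect 0 D1)) mem_iota !add0n -/o ltnNge leq_addr andbF.
rewrite (perm_size (perm_reconnect 0 D1)) size_iota /= eqn_add2l.
case: (ltngtP t m) le_tm => [lt_tm | // | -> _]; last by rewrite modnn.
move=> _; rewrite index_cat mem_iota leq_addr ltn_add2l lt_tm.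
have -> : index (o + t) (iota o m) = t.
  by rewrite -(nth_iota 0 o lt_tm) index_uniq ?size_iota ?iota_uniq.
by rewrite modn_small.
Qed.

Lemma iter_next_component t i : t <= m -> iter i next (o + t) = o + (t + i) %% m.+1.
Proof.
move=> le_tm; elim: i => [|i IH]; first by rewrite addn0 modn_small.
rewrite iterS IH next_component; last by rewrite -ltnS ltn_pmod.
by rewrite -addn1 modnDml addn1 addnS.
Qed.

Lemma closure_orbit_component n t : m <= n -> t <= m ->
  closure_orbit q n (o + t) = traject next (o + t) m.+1.
Proof.
move=> le_mn le_tm; apply: take_traject_cycle => //.
  by rewrite iter_next_component // modnDr modn_small.
apply/trajectP => -[i lt_im] /eqP; rewrite -iterSr iter_next_component //.
rewrite eqn_add2l eq_sym.
have : (t + i.+1 == t + 0 %[mod m.+1]) = false by rewrite eqn_modDl mod0n modn_small.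
by rewrite addn0 (modn_small (_ : t < m.+1)) // => ->.
Qed.

Lemma closure_orbit_component_head n : m <= n -> closure_orbit q n o = iota o m.+1.
Proof.
move=> le_mn; rewrite -[o]addn0 closure_orbit_component //.
apply: (@eq_from_nth _ (o + 0)); rewrite size_traject ?size_iota // => i lt_im.
by rewrite nth_traject // nth_iota // iter_next_component // add0n modn_small // addn0.
Qed.

Lemma closure_orbit_component_min n t : m <= n -> t <= m ->
  all (leq (o + t)) (closure_orbit q n (o + t)) = (t == 0).
Proof.
move=> le_mn le_tm; case: (posnP t) => [-> | t_gt0].
  rewrite addn0 closure_orbit_component_head //.
  by apply/allP => x; rewrite mem_iota => /andP[].
have o_orbit : o \in closure_orbit q n (o + t).
  rewrite closure_orbit_component //; apply/trajectP; exists (m.+1 - t).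
    by rewrite ltn_subrL t_gt0.
  by rewrite iter_next_component // subnKC ?modnn ?addn0 // leqW.
apply/negbTE/allP => /(_ o o_orbit); rewrite -[o in _ <= o]addn0 leq_add2l leqn0.
by rewrite (gtn_eqF t_gt0).
Qed.

End ComponentCycle.

Lemma flatten_spread_component D1 w D2 :
  flatten [seq nth [::] (spread (D1 ++ w :: D2)) j
          | j <- iota (size (spread D1)) (size w).+1] = w.
Proof.
rewrite map_nth_iota; last first.
  by rewrite spread_cat size_cat addKn size_spread_cons leq_addr.
rewrite spread_cat drop_size_cat //= -cat_rcons take_size_cat ?size_rcons ?size_map //.
by rewrite flatten_rcons cats0 flatten_seq1.
Qed.

Section ClosureOfReconnect.
Variables (D : diagram) (W : seq (seq event)) (h : event -> event).
Let n := size (spread D).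
Let q := reconnect 0 D.
Hypothesis words : forall j, j < n -> nth [::] W j = map h (nth [::] (spread D) j).

Lemma closure_components D1 D2 : D = D1 ++ D2 ->
  [seq flatten [seq nth [::] W j | j <- closure_orbit q n s]
  | s <- iota (size (spread D1)) (size (spread D2))
  & all (leq s) (closure_orbit q n s)]
  = [seq map h w | w <- D2].
Proof.
elim: D2 D1 => [|w D2 IH] D1 D_eq //.
set o := size (spread D1).
have le_n : o + (size w).+1 <= n.
  by rewrite /n D_eq spread_cat size_cat size_spread_cons addnA leq_addr.
have le_wn : size w <= n by apply: leq_trans le_n; rewrite addnS leqW // leq_addl.
rewrite size_spread_cons iotaD filter_cat map_cat.
have -> : [seq s <- iota o (size w).+1 | all (leq s) (closure_orbit q n s)] = [:: o].
  rewrite -[o in iota o]addn0 iotaDl filter_map.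
  rewrite (@eq_in_filter _ _ (pred1 0)) => [|t]; last first.
    rewrite mem_iota => /andP[_]; rewrite add0n ltnS => le_tw.
    by rewrite /q D_eq; exact: closure_orbit_component_min.
  by rewrite filter_pred1_uniq ?iota_uniq //= addn0.
rewrite -[w :: D2]cat1s map_cat; congr (_ ++ _).
  apply: (congr1 (fun x => [:: x])).
  rewrite /q D_eq closure_orbit_component_head //.
  rewrite -[in RHS](flatten_spread_component D1 w D2).
  rewrite -D_eq map_flatten -map_comp; congr flatten; apply/eq_in_map => j.
  by rewrite mem_iota => /andP[_ lt_j]; apply: words; apply: leq_trans le_n.
have -> : o + (size w).+1 = size (spread (rcons D1 w)).
  by rewrite -cats1 spread_cat size_cat size_spread_cons /= addn0.
by apply: IH; rewrite D_eq cat_rcons.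
Qed.

End ClosureOfReconnect.

Lemma braid_closure_reconnect D b W (h : event -> event) :
  braid_run 0 b (iota 0 (size (spread D))) (nseq (size (spread D)) [::]) =
    (reconnect 0 D, W) ->
  (forall j, j < size (spread D) -> nth [::] W j = map h (nth [::] (spread D) j)) ->
  braid_closure (size (spread D)) b = [seq map h w | w <- D].
Proof.
by rewrite /braid_closure => -> words; apply: (closure_components words (D1 := [::])).
Qed.

Lemma injective_extension (s : seq nat) (g : nat -> nat) :
  {in s &, injective g} -> exists2 f : nat -> nat, injective f & {in s, f =1 g}.
Proof.
move=> g_inj; pose M := \max_(x <- s) g x.
have g_le x : x \in s -> g x <= M by move=> x_s; apply: leq_bigmax_seq.
exists (fun x => if x \in s then g x else x + M.+1) => [x y | x -> //].
case: ifPn => x_s; case: ifPn => y_s; first exact: g_inj.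
- by move=> E; have := g_le x x_s; rewrite E addnS ltnNge leq_addl.
- by move=> E; have := g_le y y_s; rewrite -E addnS ltnNge leq_addl.
- exact: addIn.
Qed.

Lemma index_nth_count1 (T : eqType) (x0 x : T) s j :
  count_mem x s <= 1 -> j < size s -> nth x0 s j = x -> index x s = j.
Proof.
move=> count_x lt_j nth_j.
have s_split : s = take j s ++ x :: drop j.+1 s.
  by rewrite -nth_j -drop_nth ?cat_take_drop.
have x_take : x \notin take j s.
  move: count_x; rewrite {1}s_split count_cat /= eqxx add1n.
  by rewrite -has_pred1 has_count; lia.
by rewrite {1}s_split index_cat (negbTE x_take) /= eqxx addn0 size_take lt_j.
Qed.

Lemma uniq_passages cs : uniq cs -> uniq (passages cs).
Proof. by move=> uniq_cs; apply: allpairs_uniq => // -[? ?] [? ?] _ _ [-> ->]. Qed.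

Definition relabel_event (f : nat -> nat) (e : event) : event :=
  if e is Some (c, r) then Some (f c, r) else None.

Lemma relabelE f D : relabel f D = [seq map (relabel_event f) w | w <- D].
Proof. by []. Qed.

Definition crossings (D : diagram) : seq nat := undup (pmap (omap fst) (flatten D)).

Definition passage_strand (D : diagram) (c : nat) (r : bool) : nat :=
  index [:: Cr c r] (spread D).

Definition bar_strands (D : diagram) : seq nat :=
  [seq j <- iota 0 (size (spread D)) | nth [::] (spread D) j == [:: Bar]].

Lemma count_spread D e : count_mem [:: e] (spread D) = count_mem e (flatten D).
Proof.
elim: D => //= w D IH; rewrite !count_cat /= IH count_map add0n.
by congr (_ + _); apply: eq_count => x; rewrite /= eqseq_cons andbT.
Qed.

Lemma mem_spread D e : ([:: e] \in spread D) = (e \in flatten D).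
Proof. by rewrite -!has_pred1 !has_count count_spread. Qed.

Lemma size_mem_spread D x : x \in spread D -> size x <= 1.
Proof.
elim: D => //= w D IH; rewrite mem_cat inE.
by case/orP=> [/mapP[e _ ->] | /predU1P[-> | /IH]].
Qed.

Lemma mem_crossings D c r : Cr c r \in flatten D -> c \in crossings D.
Proof. by move=> cr_D; rewrite mem_undup mem_pmap; apply/mapP; exists (Cr c r). Qed.

Section WellFormedDiagram.
Variable D : diagram.
Hypothesis wfD : wf D.
Let T := spread D.

Lemma count_passage c r : c \in crossings D -> count_mem [:: Cr c r] T = 1.
Proof.
rewrite count_spread mem_undup mem_pmap => /mapP[[[c' r'] | ] //= cr'_D [->]].
have [eq_count le1] := wfD c'.
have : 0 < count_mem (Cr c' r') (flatten D) by rewrite -has_count has_pred1.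
by case: r r' {cr'_D} => -[]; rewrite -?eq_count; case: count le1 => [|[]].
Qed.

Lemma mem_passage c r : c \in crossings D -> [:: Cr c r] \in T.
Proof. by move=> c_D; rewrite -has_pred1 has_count count_passage. Qed.

Lemma passage_strandsP c : c \in crossings D ->
  [/\ passage_strand D c true < size T, passage_strand D c false < size T
    & passage_strand D c true != passage_strand D c false].
Proof.
move=> c_D; rewrite /passage_strand !index_mem !mem_passage //; split=> //.
apply/eqP => E; have := nth_index [::] (mem_passage true c_D).
by rewrite E nth_index // mem_passage.
Qed.

Lemma eq_passage_strand c r j : c \in crossings D -> j < size T ->
  (j == passage_strand D c r) = (nth [::] T j == [:: Cr c r]).
Proof.
move=> c_D lt_j; apply/eqP/eqP => [-> | nth_j]; first by rewrite nth_index ?mem_passage.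
by rewrite /passage_strand (index_nth_count1 _ lt_j nth_j) // count_passage.
Qed.

Lemma strand_word (lab f : nat -> nat) j :
  {in crossings D, f =1 lab} -> j < size T ->
  nseq (count_mem j (bar_strands D)) Bar ++
  [seq Cr (lab p.1) p.2
  | p <- passages (crossings D) & j == passage_strand D p.1 p.2] =
  map (relabel_event f) (nth [::] T j).
Proof.
move=> f_lab lt_j.
rewrite count_uniq_mem ?filter_uniq ?iota_uniq // mem_filter mem_iota lt_j andbT.
rewrite (@eq_in_filter _ _ (fun p => nth [::] T j == [:: Some p])); last first.
  by move=> _ /allpairsP[[c r] [c_D _ ->]]; apply: eq_passage_strand.
have T_j := mem_nth [::] lt_j; have := size_mem_spread T_j.
case: (nth [::] T j) T_j => [|[[c r]|] [|e x]] //= T_j _;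
  try by rewrite (eq_filter (a2 := pred0)) ?filter_pred0.
have c_D : c \in crossings D by apply: (@mem_crossings _ c r); rewrite -mem_spread.
rewrite (eq_filter (a2 := pred1 (c, r))) => [|[c' r'] /=]; last first.
  by apply/eqP/eqP => [[-> ->] | [-> ->]].
rewrite filter_pred1_uniq ?uniq_passages ?undup_uniq ?allpairs_f //= ?(f_lab c c_D) //.
by case: r T_j.
Qed.

End WellFormedDiagram.

Theorem theorem3 :
  forall D : diagram, D != [::] -> wf D ->
    exists (n : nat) (b : braid),
      0 < n /\ braid_valid n b /\ ft_equiv (braid_closure n b) D.
Proof.
move=> D D_neq0 wfD; set n := size (spread D).
have bars_lt : all (gtn n) (bar_strands D).
  by apply/allP => j; rewrite mem_filter mem_iota => /andP[_ /andP[]].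
set W := foldl (fun W j => add_ev W j Bar) (nseq n [::]) (bar_strands D).
have [b [lab [b_valid lab_inj _ b_top b_words]]] :=
  braid_run_crossings (undup_uniq _) (passage_strandsP wfD) (size (bar_strands D)) W
                      (perm_refl (iota 0 n)) (perm_reconnect 0 D).
set run := braid_run _ b _ W in b_top b_words.
have [f f_inj f_lab] := injective_extension lab_inj.
exists n, (map BB (bar_strands D) ++ b); split; first exact: size_spread_gt0.
split; first by rewrite braid_valid_cat b_valid andbT /braid_valid all_map.
suff -> : braid_closure n (map BB (bar_strands D) ++ b) = relabel f D.
  exact/rst_sym/rst_step/St_relabel.
rewrite relabelE; apply: (braid_closure_reconnect (W := run.2)).
  by rewrite braid_run_cat braid_run_bars //= size_map add0n -b_top -surjective_pairing.
move=> j lt_jn.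
by rewrite b_words nth_add_bars nth_nseq if_same (strand_word wfD f_lab).
Qed.
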